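(* Let $p,q\in\mathcal{P}_d(\mathbb{C})$, let $\alpha$ be a root of $p$ of multiplicity $m^p_\alpha$ and $\beta$ a root of $q$ of multiplicity $m^q_\beta$. If $m:=m^p_\alpha+m^q_\beta-d\ge 0$, then $\alpha+\beta$ is a root of $p\boxplus_d q$ of multiplicity exactly $m$ (in particular, if $m=0$ then $\alpha+\beta$ is not a root of $p\boxplus_d q$).
   Context: $\mathcal{P}_d(\mathbb{C})$ denotes the monic complex polynomials of degree $d$. For $p(x)=\prod_{i=1}^d(x-\lambda_i)$ write $p(x)=\sum_{k=0}^d(-1)^k\binom{d}{k}\tilde e_k(p)x^{d-k}$, where $\tilde e_k(p)=\binom{d}{k}^{-1}\sum_{i_1<\dots<i_k}\lambda_{i_1}\cdots\lambda_{i_k}$, $\tilde e_0=1$. The finite free additive convolution $p\boxplus_d q$ is the monic degree-$d$ polynomial with $\tilde e_k(p\boxplus_d q)=\sum_{i=0}^k\binom{k}{i}\tilde e_i(p)\tilde e_{k-i}(q)$ for $0\le k\le d$. *)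

(* Complex numbers are modelled as R[i] = complex R for an
   arbitrary R : realType (a model of the real numbers), i.e. C = R[i] is C. *)
From HB Require Import structures.
From mathcomp Require Import all_boot all_order all_algebra.
From mathcomp Require Import reals complex.
Set Implicit Arguments. Unset Strict Implicit. Unset Printing Implicit Defensive.
Import Order.TTheory GRing.Theory Num.Theory.
Local Open Scope ring_scope.

(* P_d(F): monic polynomials of degree d (size = degree + 1). *)
Definition monic_deg (F : nzRingType) (d : nat) (p : {poly F}) : Prop :=
  p \is monic /\ size p = d.+1.

(* Normalized coefficient etilde_k(p), defined through the expansion
   p(x) = \sum_k (-1)^k C(d,k) etilde_k(p) x^(d-k), i.e.
   etilde_k(p) = (-1)^k * (coefficient of x^(d-k)) / C(d,k). *)
Definition etilde (F : fieldType) (d : nat) (p : {poly F}) (k : nat) : F :=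
  (-1) ^+ k * p`_(d - k) / ('C(d, k))%:R.

Definition ffconv (F : fieldType) (d : nat) (p q : {poly F}) : {poly F} :=
  \sum_(k < d.+1)
    ((-1) ^+ k * ('C(d, k))%:R *
      (\sum_(i < k.+1) ('C(k, i))%:R * etilde d p i * etilde d q (k - i)))
    *: 'X^(d - k).

(* In its Hasse-derivative form [ffconv_nderivn], p [+]_d q is
   sum_j q_(d-j) / C(d,j) * p^(j) / j!.  Hasse derivatives commute with the
   translation X -> X + c, so translating p by alpha and q by beta translates
   p [+]_d q by alpha + beta, and it suffices to take alpha = beta = 0.  Then
   p = s X^a and q = t X^b with s(0), t(0) nonzero, and in the coefficient of
   X^n only the indices j with j <= d - b and j + n >= a contribute: there are
   none for n < a + b - d, and for n = a + b - d only j = d - b, which gives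
   t(0) s(0) C(a, d - b) / C(d, d - b) <> 0 in characteristic 0. *)

From HB Require Import structures.
From mathcomp Require Import all_boot all_order all_algebra.
From mathcomp Require Import reals complex.
From mathcomp Require Import ring zify.
Set Implicit Arguments.
Unset Strict Implicit.
Unset Printing Implicit Defensive.

Import GRing.Theory Num.Theory.
Local Open Scope ring_scope.

Lemma mul_bin_bin (d k i : nat) : (i <= k <= d)%N ->
  ('C(d, k) * 'C(k, i) = 'C(d, i) * 'C(d - i, k - i))%N.
Proof.
case/andP=> ik kd; have id : (i <= d)%N by apply: leq_trans kd.
have kid : (k - i <= d - i)%N by lia.
have facts_gt0 : (0 < i`! * (k - i)`! * (d - k)`!)%N by rewrite !muln_gt0 !fact_gt0.
apply/eqP; rewrite -(eqn_pmul2r facts_gt0); apply/eqP.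
have dk : (d - i - (k - i) = d - k)%N by lia.
transitivity d`!; first by rewrite -(bin_fact kd) -(bin_fact ik); ring.
by rewrite -(bin_fact id) -(bin_fact kid) dk; ring.
Qed.

Section Multiplicity.
Variable F : fieldType.
Implicit Types (p r s : {poly F}) (c x : F).

Lemma mup_poly0 x : mup x 0 = 0%N.
Proof.
rewrite /mup; case: arg_maxnP => [|i _ _]; first by rewrite expr0 dvd1p.
by case: i => i /=; rewrite size_poly0 ltnS leqn0 => /eqP.
Qed.

Lemma mup0_factor r : r != 0 -> exists2 s, r = s * 'X^(mup 0 r) & s`_0 != 0.
Proof.
move=> r0; have [m [s]] := multiplicity_XsubC r 0.
rewrite r0 polyC0 subr0 rootE horner_coef0 /= => s0 rE.
suff -> : mup 0 r = m by exists s.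
rewrite rE mupMr ?rootE ?horner_coef0 // -[in LHS](subr0 'X) -polyC0.
by rewrite mup_XsubCX eqxx.
Qed.

Lemma mup0_lowest_coef r n :
  r`_n != 0 -> (forall j, (j < n)%N -> r`_j = 0) -> mup 0 r = n.
Proof.
move=> rn r_lt_n; have r0 : r != 0 by apply: contraNneq rn => ->; rewrite coef0.
have [s] := mup0_factor r0; set m := mup 0 r => rE s0.
have [lt_mn | lt_nm | //] := ltngtP m n.
- by move: (r_lt_n _ lt_mn) s0; rewrite rE coefMXn ltnn subnn => ->; rewrite eqxx.
- by move: rn; rewrite rE coefMXn lt_nm eqxx.
Qed.

Lemma mup_comp_XaddC_le p x c :
  (mup x p <= mup (x - c) (p \Po ('X + c%:P)))%N.
Proof.
have [-> | p0] := eqVneq p 0; first by rewrite mup_poly0.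
have pc0 : p \Po ('X + c%:P) != 0 by rewrite comp_poly_eq0 ?size_XaddC.
rewrite mup_geq //.
have /(dvdp_comp_poly ('X + c%:P)) : ('X - x%:P) ^+ mup x p %| p by rewrite -mup_geq.
rewrite rmorphXn /= comp_polyB comp_polyX comp_polyC.
by rewrite polyCB opprB addrA addrC (addrC 'X) addrA.
Qed.

Lemma mup_comp_XaddC p x c : mup (x - c) (p \Po ('X + c%:P)) = mup x p.
Proof.
apply/eqP; rewrite eqn_leq mup_comp_XaddC_le andbT.
have := mup_comp_XaddC_le (p \Po ('X + c%:P)) (x - c) (- c).
by rewrite opprK subrK polyCN comp_polyXaddC_K.
Qed.

End Multiplicity.

Section FiniteFreeConvolution.
Variable F : fieldType.
Hypothesis F_char0 : [pchar F] =i pred0.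
Implicit Types (p q : {poly F}) (c : F).

Lemma natf_bin_neq0 n m : (m <= n)%N -> 'C(n, m)%:R != 0 :> F.
Proof. by move=> mn; rewrite (pcharf0P _).1 // -lt0n bin_gt0. Qed.

Lemma ffconv_summand d k i p q : (i <= k <= d)%N ->
  (-1) ^+ k * 'C(d, k)%:R * ('C(k, k - i)%:R * etilde d p (k - i) * etilde d q i)
  = q`_(d - i) / 'C(d, i)%:R * (p`_(i + (d - k)) *+ 'C(i + (d - k), i)).
Proof.
case/andP=> ik kd; have id : (i <= d)%N by apply: leq_trans kd.
have signs : (-1) ^+ k * (-1) ^+ (k - i) * (-1) ^+ i = 1 :> F.
  by rewrite -mulrA -exprD subnK // -exprD addnn -muln2 exprM sqrr_sign.
have bins : ('C(d, k) * 'C(k, k - i) = 'C(d, k - i) * 'C(i + (d - k), i))%N.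
  rewrite mul_bin_bin ?leq_subr // subKn //; congr (_ * 'C(_, _))%N; lia.
have pidx : (d - (k - i) = i + (d - k))%N by lia.
have Cdi := natf_bin_neq0 id.
have Cdki : 'C(d, k - i)%:R != 0 :> F by apply: natf_bin_neq0; lia.
rewrite /etilde pidx -mulr_natr.
transitivity ((-1) ^+ k * (-1) ^+ (k - i) * (-1) ^+ i * ('C(d, k) * 'C(k, k - i))%:R
              * p`_(i + (d - k)) * q`_(d - i) / ('C(d, k - i)%:R * 'C(d, i)%:R)).
  by rewrite natrM; field; rewrite Cdi Cdki.
by rewrite signs bins natrM; field; rewrite Cdi Cdki.
Qed.

Lemma ffconv_nderivn d p q : (size p <= d.+1)%N ->
  ffconv d p q = \sum_(j < d.+1) (q`_(d - j) / 'C(d, j)%:R) *: p^`N(j).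
Proof.
move=> sp; have p_hi m : (d < m)%N -> p`_m = 0.
  by move=> dm; rewrite nth_default // (leq_trans sp).
apply/polyP => n; rewrite /ffconv !coef_sum.
under eq_bigr do rewrite coefZ coefXn.
under [RHS]eq_bigr do rewrite coefZ coef_nderivn.
have [dn | nd] := ltnP d n.
  rewrite big1 => [|j _]; last first.
    by rewrite gtn_eqF ?mulr0 // (leq_ltn_trans (leq_subr _ _) dn).
  by rewrite big1 // => j _; rewrite p_hi ?mul0rn ?mulr0 // ltn_addl.
pose k := (d - n)%N; have kd : (k < d.+1)%N by rewrite ltnS leq_subr.
have nE : n = (d - k)%N by rewrite subKn.
rewrite (bigD1 (Ordinal kd)) //= [X in _ + X]big1 ?addr0 => [|j /eqP jk]; last first.
  have [nj|] := eqVneq n (d - j)%N; last by rewrite mulr0.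
  by case: jk; apply: val_inj; rewrite /= /k nj subKn // -ltnS.
rewrite -nE eqxx mulr1 (bigID (fun j : 'I_d.+1 => (j < k.+1)%N)) /=.
rewrite [X in _ + X]big1 ?addr0 => [|j]; last first.
  by rewrite -leqNgt => kj; rewrite p_hi ?mul0rn ?mulr0 //; lia.
pose term j := q`_(d - j) / 'C(d, j)%:R * (p`_(j + n) *+ 'C(j + n, j)).
rewrite -(big_ord_widen _ term) //.
rewrite (reindex_inj rev_ord_inj) mulr_sumr; apply: eq_bigr => i _ /=.
have ik : (i <= k)%N by rewrite -ltnS.
by rewrite /term subSS (subKn ik) nE ffconv_summand // ik -ltnS.
Qed.

Lemma ffconvC d p q : ffconv d p q = ffconv d q p.
Proof.
rewrite /ffconv; apply: eq_bigr => k _; congr (_ * _ *: _).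
rewrite (reindex_inj rev_ord_inj); apply: eq_bigr => i _ /=.
have ik : (i <= k)%N by rewrite -ltnS.
by rewrite subSS subKn // bin_sub // mulrAC.
Qed.

Lemma derivn_comp_XaddC p c j : (p \Po ('X + c%:P))^`(j) = p^`(j) \Po ('X + c%:P).
Proof.
elim: j => [|j IHj]; first by rewrite !derivn0.
by rewrite !derivnS IHj deriv_comp derivD derivX derivC addr0 mulr1.
Qed.

Lemma nderivn_comp_XaddC p c j :
  (p \Po ('X + c%:P))^`N(j) = p^`N(j) \Po ('X + c%:P).
Proof.
have jF : j`!%:R != 0 :> F by rewrite (pcharf0P _).1 // -lt0n fact_gt0.
apply: (scalerI jF); rewrite !scaler_nat -[RHS]raddfMn /= -!nderivn_def.
exact: derivn_comp_XaddC.
Qed.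

Lemma ffconv_comp_XaddCl d p q c : (size p <= d.+1)%N ->
  ffconv d (p \Po ('X + c%:P)) q = ffconv d p q \Po ('X + c%:P).
Proof.
move=> sp; rewrite !ffconv_nderivn ?size_comp_poly2 ?size_XaddC // raddf_sum.
by apply: eq_bigr => j _; rewrite nderivn_comp_XaddC /= comp_polyZ.
Qed.

Lemma ffconv_comp_XaddC d p q a b :
  (size p <= d.+1)%N -> (size q <= d.+1)%N ->
  ffconv d (p \Po ('X + a%:P)) (q \Po ('X + b%:P))
  = ffconv d p q \Po ('X + (a + b)%:P).
Proof.
move=> sp sq; rewrite ffconv_comp_XaddCl // ffconvC ffconv_comp_XaddCl // ffconvC.
by rewrite -comp_polyA comp_polyD comp_polyX comp_polyC polyCD addrA.
Qed.

Lemma mup0_ffconv d p q : p != 0 -> q != 0 ->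
  (size p <= d.+1)%N -> (size q <= d.+1)%N -> (d <= mup 0 p + mup 0 q)%N ->
  mup 0 (ffconv d p q) = (mup 0 p + mup 0 q - d)%N.
Proof.
move=> p0 q0 sp sq; have coefE n : (ffconv d p q)`_n =
    \sum_(j < d.+1) q`_(d - j) / 'C(d, j)%:R * (p`_(j + n) *+ 'C(j + n, j)).
  rewrite ffconv_nderivn // coef_sum.
  by apply: eq_bigr => j _; rewrite coefZ coef_nderivn.
have [s] := mup0_factor p0; have [t] := mup0_factor q0.
set a := mup 0 p; set b := mup 0 q => qE t0 pE s0 dab.
have b_le_d : (b <= d)%N.
  have t_neq0 : t != 0 by apply: contraNneq t0 => ->; rewrite coef0.
  by move: sq (size_poly_gt0 t); rewrite qE size_mulXn // t_neq0; lia.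
have term0 n (j : 'I_d.+1) : (d - j < b)%N || (j + n < a)%N ->
    q`_(d - j) / 'C(d, j)%:R * (p`_(j + n) *+ 'C(j + n, j)) = 0.
  by rewrite pE qE !coefMXn => /orP[] ->; rewrite ?mul0r ?mul0rn ?mulr0.
apply: mup0_lowest_coef => [|n n_lt]; last first.
  rewrite coefE big1 // => j _; apply: term0.
  by have := ltn_ord j; case: ltnP => //= ?; lia.
have jd : (d - b < d.+1)%N by rewrite ltnS leq_subr.
rewrite coefE (bigD1 (Ordinal jd)) //= big1 ?addr0 => [|j jne]; last first.
  have : (j : nat) != (d - b)%N by apply: contra jne => /eqP e; apply/eqP/val_inj.
  by move=> ?; apply: term0; have := ltn_ord j; case: ltnP => //= ?; lia.
have -> : (d - b + (a + b - d) = a)%N by lia.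
rewrite pE qE !coefMXn subKn // !ltnn !subnn -[s`_0 *+ _]mulr_natr.
by rewrite !mulf_neq0 ?invr_eq0 ?natf_bin_neq0 ?leq_subr //; lia.
Qed.

Lemma mup_ffconv d p q alpha beta : p != 0 -> q != 0 ->
  (size p <= d.+1)%N -> (size q <= d.+1)%N ->
  (d <= mup alpha p + mup beta q)%N ->
  mup (alpha + beta) (ffconv d p q) = (mup alpha p + mup beta q - d)%N.
Proof.
move=> p0 q0 sp sq.
rewrite -[mup alpha p](mup_comp_XaddC _ _ alpha) -[mup beta q](mup_comp_XaddC _ _ beta).
rewrite -[LHS](mup_comp_XaddC _ _ (alpha + beta)) !subrr -ffconv_comp_XaddC //.
by apply: mup0_ffconv; rewrite ?comp_poly_eq0 ?size_comp_poly2 ?size_XaddC.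
Qed.

End FiniteFreeConvolution.

Theorem mainTheorem2 (R : realType) (d : nat) (p q : {poly R[i]})
    (alpha beta : R[i]) :
  monic_deg d p -> monic_deg d q ->
  root p alpha -> root q beta ->
  (d <= mup alpha p + mup beta q)%N ->
  mup (alpha + beta) (ffconv d p q) = (mup alpha p + mup beta q - d)%N.
Proof.
move=> [p_monic sp] [q_monic sq] _ _.
apply: mup_ffconv; rewrite ?monic_neq0 ?sp ?sq //; exact: pchar_num.
Qed.
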